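(* Let $\mathcal{V}$ be the list of vectors produced by the first reduction (described in the context) from an instance of the (3,2-2) Set Splitting Problem with variables $x(1),\dots,x(n)$ and sets $S_1,\dots,S_m$. Let $z(i,h) \in \{\pm1\}$ for $1 \le i \le n$, $1 \le h \le 4$, and $w(j,h) \in \{\pm 1\}$ for $j \in B$, $1 \le h \le 3$. If there are $k$ indices $i$ for which $z(i,h)$ is not constant in $h$, then the matrix $M(\mathcal{V}, z, w)$ has at least $k$ diagonal entries, in rows/columns indexed by $B$, of absolute value at least $1/50$.
   Context: An instance of the (3,2-2) Set Splitting Problem consists of $\pm1$ variables $x(1),\dots,x(n)$ and sets $S_1,\dots,S_m \subseteq \{1,\dots,n\}$ each of size exactly 4, with each variable in at most 3 sets; $x$ satisfies $S_j$ if $\sum_{i\in S_j} x(i) = 0$. Let $q_1 = \tfrac15 (1,4,-2,-2)^T$, $q_2 = \tfrac15(4,1,2,2)^T$, $q_3 = \tfrac15(-2,2,-1,4)^T$, $q_4 = \tfrac15(-2,2,4,-1)^T$ (an orthonormal basis of $\mathbb{R}^4$). The first reduction: for each $i$ let $A_i = \{ j : i \in S_j\}$; if $|A_i| = t$ (so $t\le 3$), introduce a set $B_i$ of $4 - t$ new coordinates (so $B_i \neq \emptyset$). Let $A = \{1,\dots,m\}$, $B = \bigcup_i B_i$ (disjoint union of new coordinates), and work in $\mathbb{R}^{A \cup B}$. Let $T_i = A_i \cup B_i$ (a set of 4 coordinates) and fix a bijection of $T_i$ with $\{1,2,3,4\}$. For $1\le h\le 4$, $q_{i,h}$ is the vector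 that is zero outside $T_i$ and equals $\tfrac12 q_h$ on $T_i$ (via the bijection). For each $j \in B$ and $1 \le h \le 3$ let $r_{j,h} = \tfrac12 e_j$. $\mathcal{V}$ is the list of all $q_{i,h}$ and $r_{j,h}$. For signs $z(i,h)$, $w(j,h)$, set $M(\mathcal{V}, z, w) = \sum_{i,h} z(i,h) q_{i,h} q_{i,h}^T + \sum_{j \in B, h} w(j,h) r_{j,h} r_{j,h}^T$. *)

From HB Require Import structures.
From mathcomp Require Import all_boot all_order all_algebra.
Set Implicit Arguments. Unset Strict Implicit. Unset Printing Implicit Defensive.
Import Order.TTheory GRing.Theory Num.Theory.
Local Open Scope ring_scope.

Definition Aset (n m : nat) (S : 'I_m -> {set 'I_n}) (i : 'I_n) : {set 'I_m} :=
  [set j | i \in S j].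

Definition Btype (n m : nat) (S : 'I_m -> {set 'I_n}) : finType :=
  {i : 'I_n & 'I_(4 - #|Aset S i|)}.

(* coordinates A \cup B (disjoint), A = {1..m} *)
Definition coordT (n m : nat) (S : 'I_m -> {set 'I_n}) : finType :=
  ('I_m + Btype S)%type.

Definition Bset (n m : nat) (S : 'I_m -> {set 'I_n}) (i : 'I_n) : {set Btype S} :=
  [set b : Btype S | tag b == i].

Definition Tset (n m : nat) (S : 'I_m -> {set 'I_n}) (i : 'I_n) : {set coordT S} :=
  [set (inl j : coordT S) | j in Aset S i] :|: [set (inr b : coordT S) | b in Bset S i].

(* 5 * q_h(c), rows h = 1..4 (here 0..3), columns c *)
Definition qnum (h c : 'I_4) : int :=
  nth 0 (nth [::] [:: [:: 1; 4; -2; -2]; [:: 4; 1; 2; 2];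
                      [:: -2; 2; -1; 4]; [:: -2; 2; 4; -1]]%Z h) c.

Definition qv (R : realFieldType) (h c : 'I_4) : R := (qnum h c)%:~R / 5%:R.

(* q_{i,h}: zero outside T_i, (1/2) q_h on T_i via the bijection f i : 'I_4 -> T_i *)
Definition qvec (R : realFieldType) (n m : nat) (S : 'I_m -> {set 'I_n})
  (f : 'I_n -> 'I_4 -> coordT S) (i : 'I_n) (h : 'I_4) (x : coordT S) : R :=
  \sum_(c < 4) (if x == f i c then 2%:R^-1 * qv R h c else 0).

Definition rvec (R : realFieldType) (n m : nat) (S : 'I_m -> {set 'I_n})
  (b : Btype S) (x : coordT S) : R :=
  if x == inr b then 2%:R^-1 else 0.

Definition Mentry (R : realFieldType) (n m : nat) (S : 'I_m -> {set 'I_n})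
  (f : 'I_n -> 'I_4 -> coordT S) (z : 'I_n -> 'I_4 -> R) (w : Btype S -> 'I_3 -> R)
  (x y : coordT S) : R :=
  \sum_(i < n) \sum_(h < 4) z i h * qvec R f i h x * qvec R f i h y
  + \sum_(b : Btype S) \sum_(h < 3) w b h * rvec R b x * rvec R b y.

From HB Require Import structures.
From mathcomp Require Import all_boot all_order all_algebra.
From mathcomp Require Import ring lra.
Set Implicit Arguments. Unset Strict Implicit. Unset Printing Implicit Defensive.
Import Order.TTheory GRing.Theory Num.Theory.
Local Open Scope ring_scope.

(* Each variable i contributes the coordinate inr b of its first new coordinate
   b in B_i (nonempty because |A_i| <= 3).  Writing inr b = f i c, only the
   q_{i,h} and the r_{b,h} meet inr b, so the diagonal entry there equals
   (sum_h z(i,h) (5 q_h(c))^2 + 25 sum_h w(b,h)) / 100.  The squares in each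
   column are 1, 16, 4, 4 up to order, so for non-constant signs the first sum
   is odd with absolute value below 25, hence not cancelled by the odd multiple
   of 25: the numerator is a nonzero even integer, of absolute value >= 2. *)

Lemma nonconstant_I4 (T : eqType) (e : 'I_4 -> T) :
  (exists h h', e h != e h') ->
  ~~ [&& e (inord 1) == e ord0, e (inord 2) == e ord0 & e (inord 3) == e ord0].
Proof.
move=> [h [h' neq_hh']]; apply: contra neq_hh' => /and3P [/eqP E1 /eqP E2 /eqP E3].
have constE (k : 'I_4) : e k = e ord0.
  rewrite -[k]inord_val; case: k => -[|[|[|[|//]]]] _ //=.
  by congr e; apply: val_inj; rewrite /= inordK.
by rewrite !constE.
Qed.

Lemma qnum_signed_column_ge2 (c : 'I_4) (e : 'I_4 -> int) (g : 'I_3 -> int) :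
  (forall h, e h = 1 \/ e h = -1) -> (forall h, g h = 1 \/ g h = -1) ->
  (exists h h', e h != e h') ->
  2 <= `|\sum_(h < 4) e h * qnum h c ^+ 2 + 25 * \sum_(h < 3) g h|.
Proof.
move=> sign_e sign_g /nonconstant_I4.
have -> : (inord 1 : 'I_4) = lift ord0 ord0 by apply: val_inj; rewrite /= inordK.
have -> : (inord 2 : 'I_4) = lift ord0 (lift ord0 ord0) by apply: val_inj; rewrite /= inordK.
have -> : (inord 3 : 'I_4) = lift ord0 (lift ord0 (lift ord0 ord0)).
  by apply: val_inj; rewrite /= inordK.
rewrite !big_ord_recl !big_ord0.
case: (sign_e ord0) => ->; case: (sign_e (lift ord0 ord0)) => ->;
case: (sign_e (lift ord0 (lift ord0 ord0))) => ->;
case: (sign_e (lift ord0 (lift ord0 (lift ord0 ord0)))) => ->;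
case: (sign_g ord0) => ->; case: (sign_g (lift ord0 ord0)) => ->;
case: (sign_g (lift ord0 (lift ord0 ord0))) => ->;
by case: c => -[|[|[|[|//]]]].
Qed.

Lemma sign_sgzK (R : numDomainType) (x : R) :
  x = 1 \/ x = -1 -> x = (sgz x)%:~R /\ (sgz x = 1 \/ sgz x = -1).
Proof. by case=> ->; rewrite sgzE; auto. Qed.

Section DiagonalOnB.
Variables (R : realFieldType) (n m : nat) (S : 'I_m -> {set 'I_n}).
Variable f : 'I_n -> 'I_4 -> coordT S.
Hypothesis f_inj : forall i, injective (f i).
Hypothesis f_onto : forall i, f i @: [set: 'I_4] = Tset S i.
Variables (z : 'I_n -> 'I_4 -> R) (w : Btype S -> 'I_3 -> R).

Lemma inr_in_Tset (b : Btype S) : (inr b : coordT S) \in Tset S (tag b).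
Proof. by rewrite inE; apply/orP; right; apply: imset_f; rewrite inE. Qed.

Lemma inr_notin_Tset (b : Btype S) i : i != tag b -> (inr b : coordT S) \notin Tset S i.
Proof.
move=> neq_i; rewrite inE; apply/norP; split; first by apply/imsetP => -[].
by apply/imsetP => -[b' + [E]]; rewrite -E inE eq_sym (negbTE neq_i).
Qed.

Lemma qvec_f i h c : qvec R f i h (f i c) = 2%:R^-1 * qv R h c.
Proof.
rewrite /qvec (bigD1 c) //= eqxx big1 ?addr0 // => c' neq_c'.
by rewrite (inj_eq (@f_inj i)) eq_sym (negbTE neq_c').
Qed.

Lemma qvec_inr_other (b : Btype S) i h : i != tag b -> qvec R f i h (inr b) = 0.
Proof.
move=> neq_i; rewrite /qvec big1 // => c _; case: eqP => // E.
by have := inr_notin_Tset neq_i; rewrite -f_onto E imset_f.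
Qed.

Lemma Mentry_diag_inr (b : Btype S) c : f (tag b) c = inr b ->
  Mentry f z w (inr b) (inr b) =
  100%:R^-1 * (\sum_(h < 4) z (tag b) h * (qnum h c ^+ 2)%:~R
               + 25%:R * \sum_(h < 3) w b h).
Proof.
move=> fc; rewrite /Mentry (bigD1 (tag b)) //= (bigD1 b) //=.
rewrite [X in _ + X + _]big1 ?addr0; last first.
  by move=> i neq_i; apply: big1 => h _; rewrite qvec_inr_other // !mulr0.
rewrite [X in _ + (_ + X)]big1 ?addr0; last first.
  move=> b' neq_b'; apply: big1 => h _.
  by rewrite /rvec (inj_eq (@inr_inj _ _)) eq_sym (negbTE neq_b') !mulr0.
rewrite /rvec eqxx -fc mulrDr mulrA !mulr_sumr.
by congr (_ + _); apply: eq_bigr => h _; rewrite ?qvec_f /qv ?rmorphXn /=; field.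
Qed.

Lemma Mentry_diag_inr_ge (b : Btype S) c : f (tag b) c = inr b ->
  (forall h, z (tag b) h = 1 \/ z (tag b) h = -1) ->
  (forall h, w b h = 1 \/ w b h = -1) ->
  (exists h h', z (tag b) h != z (tag b) h') ->
  50%:R^-1 <= `|Mentry f z w (inr b) (inr b)|.
Proof.
move=> fc sign_z sign_w [h [h' neq_z]]; rewrite (Mentry_diag_inr fc).
have z_sgz k := (sign_sgzK (sign_z k)).1.
have w_sgz k := (sign_sgzK (sign_w k)).1.
have nonconst : exists h h', sgz (z (tag b) h) != sgz (z (tag b) h').
  by exists h, h'; apply: contra neq_z => /eqP E; rewrite z_sgz E -z_sgz.
have := qnum_signed_column_ge2 c (fun k => (sign_sgzK (sign_z k)).2)
  (fun k => (sign_sgzK (sign_w k)).2) nonconst.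
set K := (_ + _)%R => K_ge2.
have -> : \sum_(h < 4) z (tag b) h * (qnum h c ^+ 2)%:~R
          + 25%:R * \sum_(h < 3) w b h = K%:~R.
  rewrite /K rmorphD rmorphM !rmorph_sum /=.
  by congr (_ + _ * _); apply: eq_bigr => k _; rewrite ?rmorphM /= -?z_sgz -?w_sgz.
have : (2 : R) <= `|K%:~R| by rewrite -intr_norm (_ : 2 = (2 : int)%:~R) // ler_int.
rewrite normrM normfV (@ger0_norm _ 100%:R) //; lra.
Qed.

End DiagonalOnB.

Theorem lemma8 (R : realFieldType) (n m : nat) (S : 'I_m -> {set 'I_n})
  (hS4 : forall j, #|S j| = 4%N)
  (hA3 : forall i, (#|Aset S i| <= 3)%N)
  (f : 'I_n -> 'I_4 -> coordT S)
  (hfinj : forall i, injective (f i))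
  (hfim : forall i, f i @: [set: 'I_4] = Tset S i)
  (z : 'I_n -> 'I_4 -> R) (w : Btype S -> 'I_3 -> R)
  (hz : forall i h, z i h = 1 \/ z i h = -1)
  (hw : forall b h, w b h = 1 \/ w b h = -1) :
  (#|[set i : 'I_n | [exists h : 'I_4, exists h' : 'I_4, z i h != z i h']]|
     <= #|[set b : Btype S | ((50%:R^-1 : R) <= `|Mentry f z w (inr b) (inr b)|)%R]|)%N.
Proof.
have B_nonempty i : (0 < 4 - #|Aset S i|)%N by rewrite subn_gt0 ltnS.
pose b0 i : Btype S := Tagged (fun i => 'I_(4 - #|Aset S i|)) (Ordinal (B_nonempty i)).
have b0_inj : injective b0 by move=> i j /(congr1 tag).
rewrite -(card_imset _ b0_inj); apply: subset_leq_card; apply/subsetP => _ /imsetP [i + ->].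
rewrite !inE => /existsP [h /existsP [h' neq_z]].
have [c _ fc] : exists2 c, c \in [set: 'I_4] & inr (b0 i) = f (tag (b0 i)) c.
  by apply/imsetP; rewrite hfim inr_in_Tset.
apply: (Mentry_diag_inr_ge hfinj hfim (esym fc) (hz _) (hw _)).
by exists h, h'.
Qed.
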